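(* Let $k\ge 0$ be an integer and let $G$ be an undirected graph of degeneracy $k$. Then $f(G)\leq \frac{k-1}{k+1}\,n(G)$ if $k$ is odd, and $f(G)\leq \frac{k}{k+2}\,n(G)$ if $k$ is even.
   Context: All graphs are finite and simple. $n(G)$ is the number of vertices and $f(G)$ is the minimum size of a feedback vertex set of $G$ (a set $F\subseteq V(G)$ with $G-F$ acyclic). An ordering $\phi$ of $V(G)$ is a $k$-elimination ordering if each vertex has at most $k$ neighbours preceding it in $\phi$; the degeneracy of $G$ is the least $k$ such that $G$ has a $k$-elimination ordering. *)

From mathcomp Require Import all_boot.
Set Implicit Arguments. Unset Strict Implicit. Unset Printing Implicit Defensive.

Definition simple_graph (T : finType) (e : rel T) : Prop :=
  symmetric e /\ irreflexive e.

Definition nverts (T : finType) : nat := #|T|.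

Definition has_cycle_in (T : finType) (e : rel T) (A : {set T}) : Prop :=
  exists s : seq T, [/\ uniq s, 3 <= size s, all (fun v => v \in A) s & cycle e s].

Definition feedback_vertex_set (T : finType) (e : rel T) (F : {set T}) : Prop :=
  ~ has_cycle_in e (~: F).

(* F is a minimum feedback vertex set, so #|F| = f(G). *)
Definition min_feedback_vertex_set (T : finType) (e : rel T) (F : {set T}) : Prop :=
  feedback_vertex_set e F /\
  forall F' : {set T}, feedback_vertex_set e F' -> #|F| <= #|F'|.

Definition elimination_ordering (T : finType) (e : rel T) (k : nat) (phi : seq T) : Prop :=
  [/\ uniq phi, forall v : T, v \in phi &
      forall (i : nat) (x0 : T), i < size phi ->
        count (e (nth x0 phi i)) (take i phi) <= k].

Definition degeneracy (T : finType) (e : rel T) (k : nat) : Prop :=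
  (exists phi, elimination_ordering e k phi) /\
  forall j, (exists phi, elimination_ordering e j phi) -> k <= j.

(* Take a k-elimination ordering and let d := k./2, so that every vertex has at
   most 2d + 1 earlier neighbours.  Colouring greedily along the ordering with
   d + 1 colours, some colour is shared by at most one earlier neighbour of the
   vertex being coloured.  Each colour class then induces a forest: on a cycle
   inside a class, the vertex coming last in the ordering would have two earlier
   neighbours of its own colour.  The largest class has at least n/(d+1)
   vertices, so its complement is a feedback vertex set of size at most
   d n/(d+1), which is (k-1)/(k+1) n for odd k and k/(k+2) n for even k. *)
From mathcomp Require Import all_boot zify.
From Stdlib Require Import Classical.
Set Implicit Arguments. Unset Strict Implicit. Unset Printing Implicit Defensive.

Definition earlier (T : eqType) (s : seq T) (v : T) : seq T := take (index v s) s.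

Lemma earlier_rcons (T : eqType) (s : seq T) w v :
  v \in s -> earlier (rcons s w) v = earlier s v.
Proof. by move=> sv; rewrite /earlier -cats1 index_cat sv takel_cat ?index_size. Qed.

Lemma earlier_rcons_last (T : eqType) (s : seq T) w :
  w \notin s -> earlier (rcons s w) w = s.
Proof.
move=> ws; rewrite /earlier -cats1 index_cat (negbTE ws) /= eqxx addn0.
exact: take_size_cat.
Qed.

Lemma count_ge2 (T : eqType) (p : pred T) (s : seq T) y z :
  y != z -> y \in s -> z \in s -> p y -> p z -> 1 < count p s.
Proof.
move=> neq_yz sy sz py pz; rewrite -size_filter.
apply: (@uniq_leq_size _ [:: y; z]); first by rewrite /= inE neq_yz.
by move=> u; rewrite !inE mem_filter => /orP[]/eqP->; apply/andP.
Qed.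

Lemma cycle_two_neighbours (T : eqType) (e : rel T) (s : seq T) x :
  uniq s -> 2 < size s -> cycle e s -> x \in s ->
  exists y z, [/\ uniq [:: x; y; z], {subset [:: y; z] <= s}, e x y & e z x].
Proof.
move=> us ss cs sx; have := rot_index sx; move: (drop _ _ ++ _) => p def_p.
have up : uniq (x :: p) by rewrite -def_p rot_uniq.
have sp : 2 < size (x :: p) by rewrite -def_p size_rot.
have cp : cycle e (x :: p) by rewrite -def_p rot_cycle.
have sub_p : {subset x :: p <= s} by move=> u; rewrite -def_p mem_rot.
case: p {def_p} up sp cp sub_p => [|y q] //; case/lastP: q => [|q z] // up _ cp sub_p.
exists y, z; split.
- by apply: subseq_uniq up; rewrite /= !eqxx sub1seq mem_rcons mem_head.
- by move=> u; rewrite !inE => /orP[]/eqP->; apply: sub_p;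
    rewrite !inE ?mem_rcons ?inE eqxx ?orbT.
- by case/andP: cp.
- by move: cp; rewrite /= rcons_path last_rcons => /and3P[].
Qed.

Lemma acyclic_of_earlier_neighbours (T : finType) (e : rel T) (phi : seq T)
    (S : {set T}) :
  symmetric e -> {subset S <= phi} ->
  (forall v, v \in S -> count (fun u => e v u && (u \in S)) (earlier phi v) <= 1) ->
  ~ has_cycle_in e S.
Proof.
move=> sym_e sub_S early_S [s [us ss Ss cs]].
have [x0 sx0] : exists x0, x0 \in s.
  by case: s ss {us Ss cs} => // x0 s _; exists x0; rewrite mem_head.
have [x sx max_x] := @arg_maxnP _ x0 [in s] (fun v => index v phi) sx0.
have [y [z [/and3P[] + yz _ yzs exy ezx]]] := cycle_two_neighbours us ss cs sx.
rewrite !inE negb_or => /andP[xy xz]; rewrite inE in yz.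
have S_s u : u \in s -> u \in S by move=> su; apply: (allP Ss).
have earlier_x u : u \in s -> x != u -> u \in earlier phi x.
  move=> su xu; have le_ux : index u phi <= index x phi := max_x u su.
  rewrite /earlier in_take ?sub_S ?S_s // ltn_neqAle le_ux andbT.
  by apply: contra xu => /eqP/(index_inj x)-> //; apply: sub_S; apply: S_s.
have sy : y \in s by apply: yzs; rewrite mem_head.
have sz : z \in s by apply: yzs; rewrite !inE eqxx orbT.
have := early_S x (S_s x sx); apply/negP; rewrite -ltnNge.
apply: (count_ge2 yz (earlier_x y sy xy) (earlier_x z sz xz)).
  by rewrite exy S_s.
by rewrite sym_e ezx S_s.
Qed.

Lemma pigeonhole_colour (T : eqType) d (c : T -> 'I_d.+1) (p : pred T) s :
  count p s <= d.*2.+1 -> exists j, count (fun u => p u && (c u == j)) s <= 1.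
Proof.
move=> le_ps; case: (pickP (fun j => count (fun u => p u && (c u == j)) s <= 1)).
  by move=> j; exists j.
move=> crowded; have : \sum_(j < d.+1) 2 <= count p s.
  rewrite -sum1_count (partition_big c xpredT) //=; apply: leq_sum => j _.
  by rewrite sum1_count ltnNge crowded.
rewrite sum_nat_const card_ord => /leq_trans/(_ le_ps); lia.
Qed.

Lemma greedy_colouring (T : eqType) (e : rel T) d (s : seq T) :
  uniq s -> (forall v, v \in s -> count (e v) (earlier s v) <= d.*2.+1) ->
  exists c : T -> 'I_d.+1, forall v, v \in s ->
    count (fun u => e v u && (c u == c v)) (earlier s v) <= 1.
Proof.
elim/last_ind: s => [|s w IH]; first by exists (fun _ => ord0).
rewrite rcons_uniq => /andP[ws us] few_earlier.
have [v sv|c col_c] := IH us.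
  by rewrite -(earlier_rcons w sv) few_earlier // mem_rcons inE sv orbT.
have [j few_j] : exists j, count (fun u => e w u && (c u == j)) s <= 1.
  apply: pigeonhole_colour.
  by rewrite -{1}(earlier_rcons_last ws) few_earlier ?mem_rcons ?mem_head.
pose c' u := if u == w then j else c u.
have c'E : {in s, c' =1 c} by move=> u su; rewrite /c'; case: eqP su ws => // -> ->.
exists c' => v; rewrite mem_rcons inE => /predU1P[->|sv].
  rewrite earlier_rcons_last //; apply: leq_trans few_j; apply: eq_leq.
  by apply: eq_in_count => u su; rewrite c'E // /c' eqxx.
rewrite earlier_rcons //; apply: leq_trans (col_c v sv); apply: eq_leq.
by apply: eq_in_count => u /mem_take su; rewrite !c'E.
Qed.

Lemma large_colour_class (T : finType) d (c : T -> 'I_d.+1) :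
  exists j, #|T| <= d.+1 * #|[set u | c u == j]|.
Proof.
have [j _ max_j] :=
  @arg_maxnP _ ord0 xpredT (fun j => #|[set u | c u == j]|) isT.
exists j; rewrite -[#|T|]sum1_card (partition_big c xpredT) //=.
apply: (@leq_trans (\sum_(i < d.+1) #|[set u | c u == j]|)).
  by apply: leq_sum => i _; rewrite sum1dep_card; exact: max_j.
by rewrite sum_nat_const card_ord.
Qed.

Lemma exists_min_feedback_vertex_set (T : finType) (e : rel T) (F : {set T}) :
  feedback_vertex_set e F ->
  exists2 F0, min_feedback_vertex_set e F0 & #|F0| <= #|F|.
Proof.
have [n] := ubnP #|F|; elim: n F => // n IH F /ltnSE le_Fn fvs_F.
case: (classic (exists2 F', feedback_vertex_set e F' & #|F'| < #|F|)).
  case=> F' fvs_F' lt_F'F.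
  have [F0 min_F0 le_F0] := IH F' (leq_trans lt_F'F le_Fn) fvs_F'.
  by exists F0 => //; apply: leq_trans le_F0 (ltnW lt_F'F).
move=> none_smaller; exists F => //; split=> // F' fvs_F'.
by rewrite leqNgt; apply/negP => lt_F'F; apply: none_smaller; exists F'.
Qed.

Lemma elimination_orderingW (T : finType) (e : rel T) k k' phi :
  k <= k' -> elimination_ordering e k phi -> elimination_ordering e k' phi.
Proof.
move=> le_kk' [uphi phi_all bound]; split=> // i x0 lt_i.
exact: leq_trans (bound i x0 lt_i) le_kk'.
Qed.

Lemma elimination_ordering_earlier (T : finType) (e : rel T) k phi v :
  elimination_ordering e k phi -> count (e v) (earlier phi v) <= k.
Proof.
case=> _ phi_all bound; have := bound (index v phi) v.
by rewrite index_mem nth_index phi_all //; apply.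
Qed.

Lemma min_feedback_vertex_set_bound (T : finType) (e : rel T) d phi :
  symmetric e -> elimination_ordering e d.*2.+1 phi ->
  exists2 F, min_feedback_vertex_set e F & d.+1 * #|F| <= d * #|T|.
Proof.
move=> sym_e eo; have [uphi phi_all _] := eo.
have [c col_c] :=
  greedy_colouring uphi (fun v _ => elimination_ordering_earlier v eo).
have [j large_j] := large_colour_class c.
set S := [set u | c u == j].
have acyclic_S : ~ has_cycle_in e S.
  apply: (@acyclic_of_earlier_neighbours _ _ phi) => // v; rewrite inE => /eqP cv.
  apply: leq_trans (col_c v (phi_all v)); apply: eq_leq.
  by apply: eq_count => u; rewrite inE cv.
have fvs : feedback_vertex_set e (~: S) by rewrite /feedback_vertex_set setCK.
have [F min_F le_F] := exists_min_feedback_vertex_set fvs.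
exists F => //; apply: (@leq_trans (d.+1 * #|~: S|)).
  by rewrite leq_mul2l le_F orbT.
by rewrite [#|~: S|]cardsCs setCK mulnBr leq_subLR mulSn leq_add2r.
Qed.

Theorem mainTheorem3 (T : finType) (e : rel T) (k : nat) :
  simple_graph e -> degeneracy e k ->
  exists F : {set T}, min_feedback_vertex_set e F /\
    (if odd k then (k + 1) * #|F| <= (k - 1) * nverts T
     else (k + 2) * #|F| <= k * nverts T).
Proof.
move=> [sym_e _] [[phi eo] _].
have k_le : k <= k./2.*2.+1 by rewrite -{1}(odd_double_half k); case: odd.
have [F min_F bound_F] :=
  min_feedback_vertex_set_bound sym_e (elimination_orderingW k_le eo).
exists F; split=> //; rewrite /nverts; move: bound_F.
by have := odd_double_half k; move: k./2 => d; case: odd => /= <-; nia.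
Qed.
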